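(* The maximal absolute projection constant in dimension $5$ satisfies $$\lambda(5)\ \ge\ \lambda(5,16)\ \ge\ \frac{5}{59}\left(11+6\sqrt5\right)\approx 2.06919.$$
   Context: For a real Banach space $X$ and finite-dimensional subspace $Y$, $\lambda(Y,X)=\inf\{\|P\|\}$ over bounded linear projections $P:X\to Y$ (i.e. $P|_Y=\mathrm{Id}_Y$). The absolute projection constant is $\lambda(Y)=\sup\{\lambda(Y,X): Y\subset X\}$ over all real Banach superspaces $X$, and $\lambda(m)=\sup\{\lambda(Y):\dim Y=m\}$. For integers $n\ge m$, $\lambda(m,n):=\sup\{\lambda(Y,\ell_\infty^{(n)}): Y\subset\ell_\infty^{(n)},\ \dim Y=m\}$, where $\ell_\infty^{(n)}$ is $\mathbb{R}^n$ with the max norm. *)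

From HB Require Import structures.
From mathcomp Require Import all_boot all_order all_algebra.
From mathcomp Require Import all_classical all_reals all_analysis.
Set Implicit Arguments. Unset Strict Implicit. Unset Printing Implicit Defensive.
Import Order.TTheory GRing.Theory Num.Theory.
Import numFieldNormedType.Exports.
Local Open Scope classical_set_scope.
Local Open Scope ring_scope.

Definition span_of {R : realType} {X : normedModType R} {m : nat}
  (v : 'I_m -> X) : set X :=
  [set x | exists c : 'I_m -> R, x = \sum_(i < m) c i *: v i].

Definition lin_indep {R : realType} {X : normedModType R} {m : nat}
  (v : 'I_m -> X) : Prop :=
  forall c : 'I_m -> R, \sum_(i < m) c i *: v i = 0 -> forall i, c i = 0.

Definition subspace_dim {R : realType} {X : normedModType R} (m : nat)
  (Y : set X) : Prop :=
  exists v : 'I_m -> X, lin_indep v /\ Y = span_of v.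

Definition opnorm {R : realType} {X : normedModType R} (P : X -> X) : \bar R :=
  ereal_sup [set (`|P x|)%:E | x in [set x : X | `|x| <= 1]].

Definition is_projection {R : realType} {X : normedModType R}
  (Y : set X) (P : {linear X -> X}) : Prop :=
  (forall x, Y (P x)) /\ (forall y, Y y -> P y = y).

(* Relative projection constant lambda(Y,X): infimum of ||P|| over linear
   projections onto Y (unbounded ones have norm +oo, so this is the infimum
   over bounded projections). *)
Definition rel_proj_const {R : realType} {X : normedModType R} (Y : set X)
  : \bar R :=
  ereal_inf [set opnorm (P : X -> X) | P in [set P : {linear X -> X} |
                                              is_projection Y P]].

Definition abs_proj_const_max (R : realType) (m : nat) : \bar R :=
  ereal_sup [set r | exists (X : completeNormedModType R) (Y : set X),
                        subspace_dim m Y /\ r = rel_proj_const Y].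

(* lambda(m,n): sup over m-dimensional subspaces of l_infty^(n), modelled as
   'rV[R]_n whose norm is the max norm of the entries. *)
Definition proj_const_mn (R : realType) (m n : nat) : \bar R :=
  ereal_sup [set r | exists Y : set 'rV[R]_n,
                        subspace_dim m Y /\ r = rel_proj_const Y].

From HB Require Import structures.
From mathcomp Require Import all_boot all_order all_algebra.
From mathcomp Require Import all_classical all_reals all_analysis.
From mathcomp Require Import ring lra.
Import Order.TTheory GRing.Theory Num.Theory.
Import numFieldNormedType.Exports.
Local Open Scope ring_scope.
Set Implicit Arguments. Unset Strict Implicit.

(* Let Y be the space of restrictions of traceless quadratic forms on R^3 to
   the sixteen 5-fold and 3-fold axes of the icosahedron, a 5-dimensional
   subspace of l_infty^16.  Suppose sign vectors s_i and weights w_i >= 0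
   satisfy sum_i w_i y_i s_i = c y for all y in Y.  Computing a trace in a
   coordinate basis of Y gives sum_i w_i (P s_i)_i = 5 c for every projection P
   onto Y, while (P s_i)_i <= ||P|| for each i; hence ||P|| >= 5 c / sum_i w_i,
   which is 5 (11 + 6 sqrt 5) / 59 for the icosahedral data. *)

Lemma opnorm_ge_norm {R : realType} {X : normedModType R} (P : X -> X) (x : X) :
  `|x| <= 1 -> (`|P x|%:E <= opnorm P)%E.
Proof. by move=> x_le1; apply: ereal_sup_ubound; exists x. Qed.

Lemma mx_entry_le_norm (K : realDomainType) m n (A : 'M[K]_(m, n)) i j :
  `|A i j| <= `|A|.
Proof.
rewrite [`|A|]mx_normrE.
exact: (le_bigmax _ (fun ij : 'I_m * 'I_n => `|A ij.1 ij.2|) (i, j)).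
Qed.

Lemma mx_norm_le (K : realDomainType) m n (A : 'M[K]_(m, n)) b :
  0 <= b -> (forall i j, `|A i j| <= b) -> `|A| <= b.
Proof.
move=> b_ge0 Ale; rewrite [`|A|]mx_normrE.
by apply/bigmax_leP; split => // ij _; apply: Ale.
Qed.

Lemma span_of_gen {R : realType} {X : normedModType R} {m : nat}
  (v : 'I_m -> X) (k : 'I_m) : span_of v (v k).
Proof.
exists (fun l => (l == k)%:R).
rewrite (bigD1 k) //= eqxx scale1r big1 ?addr0 // => l /negbTE ->.
by rewrite scale0r.
Qed.

Section DualCertificate.
Variables (R : realType) (m n : nat) (v : 'I_m -> 'rV[R]_n) (a : 'I_m -> 'I_n).
Hypothesis v_dual : forall k l, v k 0 (a l) = (k == l)%:R.

Lemma span_coord (c : 'I_m -> R) l : (\sum_k c k *: v k) 0 (a l) = c l.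
Proof.
rewrite summxE (bigD1 l) //= !mxE v_dual eqxx mulr1 big1 ?addr0 //.
by move=> k /negbTE kl; rewrite !mxE v_dual kl mulr0.
Qed.

Lemma span_ofE z : span_of v z -> z = \sum_k z 0 (a k) *: v k.
Proof. by case=> c ->; apply: eq_bigr => k _; rewrite span_coord. Qed.

Lemma lin_indep_dual : lin_indep v.
Proof. by move=> c c0 l; rewrite -(span_coord c l) c0 mxE. Qed.

Variables (x : 'I_n -> 'rV[R]_n) (w : 'I_n -> R) (c : R).
Hypotheses (x_norm : forall i, `|x i| <= 1) (w_ge0 : forall i, 0 <= w i).
Hypothesis certificate : forall k, \sum_i (w i * v k 0 i) *: x i = c *: v k.

Lemma weighted_diag_sumE (P : {linear 'rV[R]_n -> 'rV[R]_n}) :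
  is_projection (span_of v) P -> \sum_i w i * P (x i) 0 i = c *+ m.
Proof.
case=> PY Pid.
transitivity (\sum_i w i * \sum_k P (x i) 0 (a k) * v k 0 i).
  apply: eq_bigr => i _; congr (_ * _).
  rewrite {1}(span_ofE (PY (x i))) summxE; apply: eq_bigr => k _.
  by rewrite !mxE.
transitivity (\sum_k P (\sum_i (w i * v k 0 i) *: x i) 0 (a k)).
  under eq_bigr do rewrite big_distrr /=.
  rewrite exchange_big /=; apply: eq_bigr => k _.
  rewrite linear_sum summxE; apply: eq_bigr => i _.
  by rewrite linearZ mxE /= mulrA mulrAC.
rewrite -[m in RHS]card_ord -sumr_const; apply: eq_bigr => k _.
rewrite certificate linearZ /= Pid; last exact: span_of_gen.
by rewrite !mxE v_dual eqxx mulr1.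
Qed.

Lemma opnorm_projection_ge (P : {linear 'rV[R]_n -> 'rV[R]_n}) :
  is_projection (span_of v) P -> 0 < \sum_i w i ->
  ((c *+ m / \sum_i w i)%:E <= opnorm (P : 'rV[R]_n -> 'rV[R]_n))%E.
Proof.
move=> projP w_gt0.
have diag_le i : ((P (x i) 0 i)%:E <= opnorm (P : 'rV[R]_n -> 'rV[R]_n))%E.
  apply: le_trans (opnorm_ge_norm P (x_norm i)); rewrite lee_fin.
  exact: le_trans (ler_norm _) (mx_entry_le_norm _ _ _).
have := opnorm_ge_norm P (x := 0); rewrite normr0 => /(_ ler01).
case: (opnorm _) diag_le => [b | | ] diag_le // _; last exact: leey.
rewrite lee_fin ler_pdivrMr // -(weighted_diag_sumE projP) mulr_sumr.
apply: ler_sum => i _; rewrite [b * _]mulrC; apply: ler_wpM2l => //.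
by rewrite -lee_fin.
Qed.

Lemma rel_proj_const_ge : 0 < \sum_i w i ->
  ((c *+ m / \sum_i w i)%:E <= rel_proj_const (span_of v))%E.
Proof.
move=> w_gt0; apply: le_ereal_inf_tmp => _ [P projP <-].
exact: opnorm_projection_ge.
Qed.

End DualCertificate.

(* Makes 'M[R]_(m, n) a completeNormedModType, which the library leaves
   undeclared. *)
HB.instance Definition _ (R : realType) (m n : nat) :=
  Uniform_isComplete.Build 'M[R]_(m, n) (@mx_complete _ m n).

Lemma proj_const_mn_le_max (R : realType) (m n : nat) :
  (proj_const_mn R m n <= abs_proj_const_max R m)%E.
Proof. by apply: ereal_sup_le => _ [Y [dimY ->]]; exists 'rV[R]_n, Y. Qed.

Lemma rel_proj_const_le_proj_const_mn (R : realType) (m n : nat)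
  (Y : set 'rV[R]_n) :
  subspace_dim m Y -> (rel_proj_const Y <= proj_const_mn R m n)%E.
Proof. by move=> dimY; apply: ereal_sup_ubound; exists Y. Qed.

(* Coordinates 0..5 stand for the six 5-fold axes u_i of the icosahedron and
   6..15 for its ten 3-fold axes (|u_i| = 1).  [ico_sign_tab] is the sign
   pattern of the kernel K i j = 3 <u_i, u_j>^2 - 1, and the rows of
   [ico_basis_tab] (with r = sqrt 5) are a basis of the row space of K, i.e. of
   the restrictions of traceless quadratic forms to the axes, normalised to the
   identity on the coordinates [ico_pivot_tab]. *)
Definition ico_sign_tab : seq (seq bool) := [::
  [:: true; false; false; false; false; false; true; false; false; true; true; false; true; true; false; false];
  [:: false; true; false; false; false; false; false; true; true; false; false; true; true; true; false; false];
  [:: false; false; true; false; false; false; true; true; false; false; true; true; false; false; true; false];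
  [:: false; false; false; true; false; false; false; false; true; true; true; true; false; false; false; true];
  [:: false; false; false; false; true; false; true; false; true; false; false; false; true; false; true; true];
  [:: false; false; false; false; false; true; false; true; false; true; false; false; false; true; true; true];
  [:: true; false; true; false; true; false; true; false; false; false; true; false; true; false; true; false];
  [:: false; true; true; false; false; true; false; true; false; false; false; true; false; true; true; false];
  [:: false; true; false; true; true; false; false; false; true; false; false; true; true; false; false; true];
  [:: true; false; false; true; false; true; false; false; false; true; true; false; false; true; false; true];
  [:: true; false; true; true; false; false; true; false; false; true; true; true; false; false; false; false];
  [:: false; true; true; true; false; false; false; true; true; false; true; true; false; false; false; false];
  [:: true; true; false; false; true; false; true; false; true; false; false; false; true; true; false; false];
  [:: true; true; false; false; false; true; false; true; false; true; false; false; true; true; false; false];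
  [:: false; false; true; false; true; true; true; true; false; false; false; false; false; false; true; true];
  [:: false; false; false; true; true; true; false; false; true; true; false; false; false; false; true; true]].

Definition ico_pivot_tab : seq nat := [:: 0; 2; 6; 7; 8]%N.

Lemma ico_pivot_tab_lt l : (l < 5)%N -> (nth 0 ico_pivot_tab l < 16)%N.
Proof. by do 5 (case: l => [|l] //). Qed.

Section Icosahedral.
Variables (R : realType) (r : R).

Definition ico_basis_tab : seq (seq R) := [::
  [:: 1; 1; 0; 0; -1; -1; 0; 0; 0; 0; (1/3*r); (1/3*r); (1/3*r); (1/3*r); (-2/3*r); (-2/3*r)];
  [:: 0; 0; 1; 1; -1; -1; 0; 0; 0; 0; (2/3*r); (2/3*r); (-1/3*r); (-1/3*r); (-1/3*r); (-1/3*r)];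
  [:: 0; 0; 0; (-3/5*r); (3/5*r); 0; 1; 0; 0; -1; -1; -1; 1; 0; 1; 0];
  [:: 0; (3/5*r); 0; (-3/5*r); 0; 0; 0; 1; 0; -1; -1; 0; 1; 1; 0; -1];
  [:: 0; (3/5*r); 0; 0; 0; (-3/5*r); 0; 0; 1; -1; 0; 1; 1; 0; -1; -1]].

Definition ico_entry (k j : nat) : R := nth 0 (nth [::] ico_basis_tab k) j.

Definition ico_sign (i j : nat) : R :=
  if nth false (nth [::] ico_sign_tab i) j then 1 else -1.

Definition ico_weight (i : nat) : R :=
  if (i < 6)%N then 5 * (8 - r) else 35 + 3 * r.

Lemma ico_entry_pivot k l : (k < 5)%N -> (l < 5)%N ->
  ico_entry k (nth 0 ico_pivot_tab l) = (k == l)%:R.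
Proof.
move=> k_lt l_lt.
do 5 (case: k k_lt => [_|k k_lt];
  [do 5 (case: l l_lt => [_|l l_lt]; [by []|]); by []|]).
by [].
Qed.

Hypothesis r_sqr : r * r = 5.

(* The weighted sign matrix commutes with the icosahedral group; the ratio of
   the two weights is the one for which it maps the span of the basis into
   itself, where it is then a scalar by Schur's lemma. *)
Lemma ico_certificate_entry k j : (k < 5)%N -> (j < 16)%N ->
  \sum_(0 <= i < 16) ico_weight i * ico_entry k i * ico_sign i j
  = (110 + 60 * r) * ico_entry k j.
Proof.
move=> k_lt j_lt; rewrite unlock /=.
do 5 (case: k k_lt => [_|k k_lt];
  [do 16 (case: j j_lt => [_|j j_lt];
     [by rewrite /ico_entry /ico_sign /ico_weight /=; field: r_sqr|]);
   by []|]).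
by [].
Qed.

Hypothesis r_ge0 : 0 <= r.

Lemma ico_weight_ge0 i : 0 <= ico_weight i.
Proof. by move: r_sqr r_ge0; rewrite /ico_weight; case: ifP => _; nra. Qed.

Lemma ico_weight_sum : \sum_(i < 16) ico_weight i = 590.
Proof. by rewrite -(big_mkord xpredT) unlock /= /ico_weight /=; ring. Qed.

Definition ico_basis (k : 'I_5) : 'rV[R]_16 := \row_j ico_entry k j.

Definition ico_sign_vec (i : 'I_16) : 'rV[R]_16 := \row_j ico_sign i j.

Definition ico_pivot (l : 'I_5) : 'I_16 := Ordinal (ico_pivot_tab_lt (ltn_ord l)).

Lemma ico_basis_dual k l : ico_basis k 0 (ico_pivot l) = (k == l)%:R.
Proof. by rewrite mxE ico_entry_pivot. Qed.

Lemma ico_sign_vec_norm i : `|ico_sign_vec i| <= 1.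
Proof.
apply: mx_norm_le => // ? j; rewrite mxE /ico_sign.
by case: ifP; rewrite ?normrN normr1.
Qed.

Lemma ico_certificate k :
  \sum_(i < 16) (ico_weight i * ico_basis k 0 i) *: ico_sign_vec i
  = (110 + 60 * r) *: ico_basis k.
Proof.
apply/rowP => j; rewrite summxE !mxE.
under eq_bigr do rewrite !mxE.
rewrite -(big_mkord xpredT (fun i => ico_weight i * ico_entry k i * ico_sign i j)).
exact: ico_certificate_entry.
Qed.

Lemma rel_proj_const_ico_ge :
  ((5 / 59 * (11 + 6 * r))%:E <= rel_proj_const (span_of ico_basis))%E.
Proof.
have -> : 5 / 59 * (11 + 6 * r) = (110 + 60 * r) *+ 5 / \sum_(i < 16) ico_weight i.
  by rewrite ico_weight_sum; field.
apply: (rel_proj_const_ge ico_basis_dual ico_sign_vec_norm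
  (fun i : 'I_16 => ico_weight_ge0 i) ico_certificate).
by rewrite ico_weight_sum ltr0n.
Qed.

End Icosahedral.

Theorem theorem5 (R : realType) :
  (proj_const_mn R 5 16 <= abs_proj_const_max R 5)%E /\
  ((5 / 59 * (11 + 6 * Num.sqrt 5))%:E <= proj_const_mn R 5 16)%E.
Proof.
split; first exact: proj_const_mn_le_max.
have sqrt5_sqr : Num.sqrt 5 * Num.sqrt 5 = 5 :> R.
  by rewrite -expr2 sqr_sqrtr // ler0n.
apply: le_trans (rel_proj_const_ico_ge sqrt5_sqr (sqrtr_ge0 5)) _.
apply: rel_proj_const_le_proj_const_mn.
exists (ico_basis (Num.sqrt 5)); split => //.
exact: lin_indep_dual (ico_basis_dual _).
Qed.
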